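(* Let $G$ be a countable group, let $X$ be an incontractible $G$-flow and let $Y$ be a minimal, proximal $G$-flow. Then $X$ and $Y$ are disjoint.
   Context: A $G$-flow is a compact Hausdorff space with an action of $G$ by homeomorphisms. A point $x$ of a $G$-flow is minimal if $\overline{G\cdot x}$ is a minimal flow (every orbit in it dense). A $G$-flow $X$ is incontractible if for every $n\in\mathbb{N}$ the minimal points of $X^n$ (diagonal action) are dense in $X^n$. A $G$-flow $Y$ is proximal if for all $y_1,y_2\in Y$ there exist $z\in Y$ and a net $(g_i)$ in $G$ with $g_iy_1\to z$ and $g_iy_2\to z$. Two $G$-flows $X,Y$ are disjoint if the only closed $G$-invariant subset of $X\times Y$ projecting onto both factors is $X\times Y$. *)

From Stdlib Require Import List.
Import ListNotations.
Set Implicit Arguments.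

Definition opens (T : Type) := (T -> Prop) -> Prop.

Definition is_topology {T : Type} (op : opens T) : Prop :=
  op (fun _ => True) /\
  (forall U V, op U -> op V -> op (fun x => U x /\ V x)) /\
  (forall F : (T -> Prop) -> Prop,
      (forall U, F U -> op U) -> op (fun x => exists U, F U /\ U x)).

Definition closed {T : Type} (op : opens T) (A : T -> Prop) : Prop :=
  op (fun x => ~ A x).

Definition closure {T : Type} (op : opens T) (A : T -> Prop) (x : T) : Prop :=
  forall U, op U -> U x -> exists y, U y /\ A y.

Definition dense {T : Type} (op : opens T) (A : T -> Prop) : Prop :=
  forall x, closure op A x.

Definition compact {T : Type} (op : opens T) : Prop :=
  forall F : (T -> Prop) -> Prop,
    (forall U, F U -> op U) -> (forall x, exists U, F U /\ U x) ->
    exists l : list (T -> Prop),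
      (forall U, In U l -> F U) /\ (forall x, exists U, In U l /\ U x).

Definition hausdorff {T : Type} (op : opens T) : Prop :=
  forall x y, x <> y -> exists U V, op U /\ op V /\ U x /\ V y /\
                                   (forall z, ~ (U z /\ V z)).

Definition continuous {A B : Type} (opA : opens A) (opB : opens B) (f : A -> B) : Prop :=
  forall V, opB V -> opA (fun x => V (f x)).

Definition prod_opens {I T : Type} (op : opens T) : opens (I -> T) :=
  fun U => forall f, U f ->
    exists (l : list I) (V : I -> T -> Prop),
      (forall i, In i l -> op (V i) /\ V i (f i)) /\
      (forall g, (forall i, In i l -> V i (g i)) -> U g).

Definition prod2_opens {X Y : Type} (opX : opens X) (opY : opens Y) : opens (X * Y) :=
  fun U => forall p, U p ->
    exists A B, opX A /\ opY B /\ A (fst p) /\ B (snd p) /\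
                (forall q, A (fst q) -> B (snd q) -> U q).

Definition directed {D : Type} (le : D -> D -> Prop) : Prop :=
  inhabited D /\ (forall a, le a a) /\ (forall a b c, le a b -> le b c -> le a c) /\
  (forall a b, exists c, le a c /\ le b c).

Definition converges {T D : Type} (op : opens T) (le : D -> D -> Prop)
  (net : D -> T) (x : T) : Prop :=
  forall U, op U -> U x -> exists d0, forall d, le d0 d -> U (net d).

Structure group := Group {
  gcarrier :> Type;
  gmul : gcarrier -> gcarrier -> gcarrier;
  gone : gcarrier;
  ginv : gcarrier -> gcarrier;
  gmulA : forall a b c, gmul a (gmul b c) = gmul (gmul a b) c;
  gmul1 : forall a, gmul gone a = a;
  gmulV : forall a, gmul (ginv a) a = gone
}.

Arguments gmul {_} _ _.
Arguments ginv {_} _.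

Definition countable_group (G : group) : Prop :=
  exists e : nat -> G, forall g : G, exists n, e n = g.

(* A G-flow: compact Hausdorff space with an action of G by homeomorphisms
   (each act g is continuous, with continuous inverse act (ginv g)). *)
Definition is_flow (G : group) {T : Type} (op : opens T) (act : G -> T -> T) : Prop :=
  is_topology op /\ compact op /\ hausdorff op /\
  (forall x, act (gone G) x = x) /\
  (forall (g h : G) x, act (gmul g h) x = act g (act h x)) /\
  (forall g : G, continuous op op (act g)).

Definition orbit {G : group} {T : Type} (act : G -> T -> T) (x : T) : T -> Prop :=
  fun y => exists g, y = act g x.

Definition minimal_flow {G : group} {T : Type} (op : opens T) (act : G -> T -> T) : Prop :=
  forall y, dense op (orbit act y).

(* x is a minimal point: the orbit closure of x is a minimal flow, i.e. every
   orbit in it is dense in it. *)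
Definition minimal_point {G : group} {T : Type} (op : opens T) (act : G -> T -> T)
  (x : T) : Prop :=
  forall y, closure op (orbit act x) y ->
  forall z, closure op (orbit act x) z -> closure op (orbit act y) z.

Definition fin (n : nat) := {k : nat | k < n}.

Definition pow_act {G : group} {T : Type} (n : nat) (act : G -> T -> T)
  : G -> (fin n -> T) -> (fin n -> T) :=
  fun g f k => act g (f k).

Definition incontractible {G : group} {T : Type} (op : opens T) (act : G -> T -> T) : Prop :=
  forall n : nat,
    dense (@prod_opens (fin n) T op) (minimal_point (@prod_opens (fin n) T op) (@pow_act G T n act)).

Definition proximal {G : group} {T : Type} (op : opens T) (act : G -> T -> T) : Prop :=
  forall y1 y2 : T, exists (z : T) (D : Type) (le : D -> D -> Prop) (net : D -> G),
    directed le /\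
    converges op le (fun d => act (net d) y1) z /\
    converges op le (fun d => act (net d) y2) z.

Definition disjoint_flows {G : group} {X Y : Type}
  (opX : opens X) (actX : G -> X -> X) (opY : opens Y) (actY : G -> Y -> Y) : Prop :=
  forall W : X * Y -> Prop,
    closed (prod2_opens opX opY) W ->
    (forall (g : G) p, W p -> W (actX g (fst p), actY g (snd p))) ->
    (forall x, exists y, W (x, y)) ->
    (forall y, exists x, W (x, y)) ->
    forall p, W p.

(* Let W ⊆ X × Y be closed, invariant and onto both factors, and suppose a box
   U × V around (x0, y0) misses W.  By minimality of Y finitely many translates
   h_1⁻¹V, …, h_k⁻¹V cover Y, and by incontractibility there is a minimal point
   ξ of X^k with h_i ξ_i ∈ U for every i.  Pair every ξ_i with a W-partner.
   Proximality of Y, iterated one coordinate at a time, yields a point r of the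
   orbit closure of this family in (X × Y)^k whose Y-coordinates all coincide
   (= z); the points r_i still lie in W.  Their X-part q lies in the orbit
   closure of ξ, so by minimality ξ lies in the orbit closure of q, and by
   compactness of Y the pairs (ξ_i, w) lie in W for a single w.  Some h_i
   moves w into V, so h_i (ξ_i, w) ∈ (U × V) ∩ W: a contradiction.

   Compactness is used through cluster points of families along filter bases
   (nets are the special case of tail filters). *)
From Stdlib Require Import List Classical ClassicalEpsilon FunctionalExtensionality PropExtensionality Lia.
Import ListNotations.

Lemma set_ext {T : Type} (P Q : T -> Prop) : (forall x, P x <-> Q x) -> P = Q.
Proof.
  intro H. apply functional_extensionality; intro x. apply propositional_extensionality; auto.
Qed.

Lemma open_if {T : Type} (op : opens T) (Q : Prop) (A : T -> Prop) :
  op (fun _ => True) -> (Q -> op A) -> op (fun x => Q -> A x).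
Proof.
  intros HT HA. destruct (classic Q) as [q|nq].
  - replace (fun x => Q -> A x) with A by (apply set_ext; tauto). auto.
  - replace (fun x => Q -> A x) with (fun _ : T => True) by (apply set_ext; tauto). auto.
Qed.

Lemma list_lift_preimages {A B : Type} (f : A -> B) (l : list B) :
  (forall b, In b l -> exists a, b = f a) ->
  exists la, forall b, In b l -> exists a, In a la /\ b = f a.
Proof.
  induction l as [|b l IH]; intros H.
  - exists nil; intros b [].
  - destruct IH as [la Hla]; [intros; apply H; simpl; auto|].
    destruct (H b) as [a Ha]; [simpl; auto|].
    exists (a :: la). intros b' [<-|Hb'].
    + exists a; simpl; auto.
    + destruct (Hla b' Hb') as [a' [Ha' ->]]. exists a'; simpl; auto.
Qed.

Lemma compact_finite_subfamily {T K : Type} (op : opens T) (V : K -> T -> Prop) :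
  compact op -> (forall k, op (V k)) -> (forall x, exists k, V k x) ->
  exists ks : list K, forall x, exists k, In k ks /\ V k x.
Proof.
  intros Hc HV Hcov.
  destruct (Hc (fun O => exists k, O = V k)) as [Os [HOs HcovOs]].
  - intros O [k ->]; apply HV.
  - intro x. destruct (Hcov x) as [k Hk]. exists (V k); eauto.
  - destruct (list_lift_preimages V Os HOs) as [ks Hks].
    exists ks. intro x. destruct (HcovOs x) as [O [HO Ox]].
    destruct (Hks O HO) as [k [Hk ->]]. eauto.
Qed.

(* A filter base on S is a family of
   "large" subsets containing S and stable under binary intersection; the same
   notion serves as a neighbourhood base of a (possibly implicit) point. *)
Definition filter_base {S : Type} (F : (S -> Prop) -> Prop) : Prop :=
  F (fun _ => True) /\ (forall P Q, F P -> F Q -> F (fun s => P s /\ Q s)).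

(* The point with neighbourhood base N is a cluster point of phi along F. *)
Definition clusters {A S : Type} (N : (A -> Prop) -> Prop) (F : (S -> Prop) -> Prop)
  (phi : S -> A) : Prop :=
  forall U, N U -> forall P, F P -> exists s, P s /\ U (phi s).

Definition nbhd {T : Type} (op : opens T) (x : T) : (T -> Prop) -> Prop :=
  fun U => op U /\ U x.

(* The trivial filter {S}: clustering along it means adherence to the range. *)
Definition whole (S : Type) : (S -> Prop) -> Prop := fun P => forall s, P s.

Definition tails {D : Type} (le : D -> D -> Prop) : (D -> Prop) -> Prop :=
  fun P => exists d0, forall d, le d0 d -> P d.

Definition box_nbhd {A B : Type} (N : (A -> Prop) -> Prop) (opB : opens B) (b : B)
  : ((A * B) -> Prop) -> Prop :=
  fun W => exists U V, N U /\ opB V /\ V b /\ forall a c, U a -> V c -> W (a, c).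

Lemma filter_base_whole (S : Type) : filter_base (whole S).
Proof. split; [intros s; exact Logic.I | intros P Q HP HQ s; split; auto]. Qed.

Lemma filter_base_tails {D : Type} (le : D -> D -> Prop) : directed le -> filter_base (tails le).
Proof.
  intros [[d] [_ [Htrans Hup]]]. split.
  - exists d; auto.
  - intros P Q [a Ha] [b Hb]. destruct (Hup a b) as [c [Hac Hbc]].
    exists c. intros e He; split; [apply Ha|apply Hb]; eauto.
Qed.

Lemma tails_nonempty {D : Type} (le : D -> D -> Prop) :
  directed le -> forall P, tails le P -> exists d, P d.
Proof. intros Hdir P [d0 Hd0]. exists d0. apply Hd0, Hdir. Qed.

Lemma filter_base_box_nbhd {A B : Type} (N : (A -> Prop) -> Prop) (opB : opens B) (b : B) :
  is_topology opB -> filter_base N -> filter_base (box_nbhd N opB b).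
Proof.
  intros [BT [BI _]] [NT NI]. split.
  - exists (fun _ => True), (fun _ => True). repeat split; auto.
  - intros W1 W2 (U1 & V1 & HU1 & HV1 & V1b & H1) (U2 & V2 & HU2 & HV2 & V2b & H2).
    exists (fun x => U1 x /\ U2 x), (fun x => V1 x /\ V2 x).
    repeat split; auto; [apply H1 | apply H2]; tauto.
Qed.

Lemma filter_base_finite_meet {A B : Type} (N : (A -> Prop) -> Prop) (l : list B)
  (f : B -> A -> Prop) :
  filter_base N -> (forall b, In b l -> N (f b)) -> N (fun x => forall b, In b l -> f b x).
Proof.
  intros [NT NI]. induction l as [|b l IH]; intro Hl.
  - replace (fun x => forall b, In b [] -> f b x) with (fun _ : A => True); auto.
    apply set_ext; intro x; simpl; split; [intros _ b' []|auto].
  - replace (fun x => forall b', In b' (b :: l) -> f b' x)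
      with (fun x => f b x /\ (fun y => forall b', In b' l -> f b' y) x).
    + apply NI; [apply Hl; left; auto | apply IH; intros; apply Hl; right; auto].
    + apply set_ext; intro x; simpl.
      split; [intros [H1 H2] b' [<-|Hb']; auto | intro H; split; auto].
Qed.

Lemma clusters_range {A S D : Type} (N : (A -> Prop) -> Prop) (F : (D -> Prop) -> Prop)
  (h : D -> S) (phi : S -> A) :
  filter_base F -> clusters N F (fun d => phi (h d)) -> clusters N (whole S) phi.
Proof.
  intros [FT _] Hc U HU P HP. destruct (Hc U HU _ FT) as [d [_ Hd]]. exists (h d); auto.
Qed.

Lemma clusters_closed_mem {T S : Type} (op : opens T) (W : T -> Prop) (phi : S -> T) (a : T) :
  closed op W -> (forall s, W (phi s)) -> clusters (nbhd op a) (whole S) phi -> W a.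
Proof.
  intros Wcl HW Hc. apply NNPP; intro Ha.
  destruct (Hc _ (conj Wcl Ha) (fun _ => True) (fun _ => Logic.I)) as [s [_ Hs]].
  exact (Hs (HW s)).
Qed.

Lemma clusters_continuous_image {A B S : Type} (opA : opens A) (opB : opens B) (c : A -> B)
  (F : (S -> Prop) -> Prop) (phi : S -> A) (a : A) :
  continuous opA opB c -> clusters (nbhd opA a) F phi ->
  clusters (nbhd opB (c a)) F (fun s => c (phi s)).
Proof.
  intros Hc Hcl U [HU Ua] P HP. exact (Hcl _ (conj (Hc U HU) Ua) P HP).
Qed.

Lemma cluster_point_is_limit {T D : Type} (op : opens T) (le : D -> D -> Prop)
  (psi : D -> T) (y z : T) :
  hausdorff op -> converges op le psi z -> clusters (nbhd op y) (tails le) psi -> y = z.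
Proof.
  intros Hhaus Hconv Hcl. apply NNPP; intro Hne.
  destruct (Hhaus _ _ Hne) as (O1 & O2 & HO1 & HO2 & O1y & O2z & Hdisj).
  destruct (Hconv O2 HO2 O2z) as [d0 Hd0].
  destruct (Hcl O1 (conj HO1 O1y) (le d0) (ex_intro _ d0 (fun d Hd => Hd))) as [d [Hd O1d]].
  exact (Hdisj (psi d) (conj O1d (Hd0 d Hd))).
Qed.

(* Otherwise every b is covered by an obstruction; finitely many of them
   cover B, and intersecting their data contradicts the clustering at a. *)
Section CompactExtension.
Variables (A B S : Type) (N : (A -> Prop) -> Prop) (F : (S -> Prop) -> Prop)
  (opB : opens B) (phi : S -> A) (psi : S -> B).

(* A witness that no point of ob_V completes a to a cluster point of (phi, psi). *)
Record obstruction := Obstruction {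
  ob_U : A -> Prop; ob_V : B -> Prop; ob_P : S -> Prop;
  ob_NU : N ob_U; ob_opV : opB ob_V; ob_FP : F ob_P;
  ob_sep : forall s, ob_P s -> ob_U (phi s) -> ob_V (psi s) -> False }.

Lemma compact_cluster_extend :
  compact opB -> filter_base N -> filter_base F -> clusters N F phi ->
  exists b, clusters (box_nbhd N opB b) F (fun s => (phi s, psi s)).
Proof.
  intros Hc HN HF Hcl. apply NNPP; intro Hnone.
  assert (Hcov : forall b, exists o : obstruction, ob_V o b).
  { intro b. apply NNPP; intro Hb. apply Hnone. exists b.
    intros W (U & V & HU & HV & Vb & HW) P HP. apply NNPP; intro Hs.
    apply Hb. refine (ex_intro _ (Obstruction U V P HU HV HP _) Vb).
    intros s Ps Us Vs. apply Hs. exists s; auto. }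
  destruct (compact_finite_subfamily opB ob_V Hc ob_opV Hcov) as [os Hos].
  destruct (Hcl (fun a => forall o, In o os -> ob_U o a)
                (filter_base_finite_meet N os ob_U HN (fun o _ => ob_NU o))
                (fun s => forall o, In o os -> ob_P o s)
                (filter_base_finite_meet F os ob_P HF (fun o _ => ob_FP o)))
    as [s [Ps Us]].
  destruct (Hos (psi s)) as [o [Ho Vo]].
  exact (ob_sep o s (Ps o Ho) (Us o Ho) Vo).
Qed.

End CompactExtension.

(* The cluster-point form of compactness used below; it passes to binary
   products without proving Tychonoff's theorem. *)
Definition cluster_compact {B : Type} (opB : opens B) : Prop :=
  forall (A S : Type) (N : (A -> Prop) -> Prop) (F : (S -> Prop) -> Prop)
    (phi : S -> A) (psi : S -> B),
  filter_base N -> filter_base F -> clusters N F phi ->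
  exists b, clusters (box_nbhd N opB b) F (fun s => (phi s, psi s)).

Lemma compact_cluster_compact {B : Type} (opB : opens B) : compact opB -> cluster_compact opB.
Proof. intros Hc A S N F phi psi. exact (compact_cluster_extend A B S N F opB phi psi Hc). Qed.

Lemma prod2_topology {X Y : Type} (opX : opens X) (opY : opens Y) :
  is_topology opX -> is_topology opY -> is_topology (prod2_opens opX opY).
Proof.
  intros (XT & XI & _) (YT & YI & _). split; [|split].
  - intros p _. exists (fun _ => True), (fun _ => True). repeat split; auto.
  - intros U V HU HV p [Up Vp].
    destruct (HU p Up) as (A1 & B1 & HA1 & HB1 & A1p & B1p & K1).
    destruct (HV p Vp) as (A2 & B2 & HA2 & HB2 & A2p & B2p & K2).
    exists (fun x => A1 x /\ A2 x), (fun y => B1 y /\ B2 y).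
    repeat split; auto; [apply K1 | apply K2]; tauto.
  - intros Fam HFam p [U [FU Up]].
    destruct (HFam U FU p Up) as (A & B & HA & HB & Ap & Bp & K).
    exists A, B. repeat split; auto. intros q Aq Bq. exists U; auto.
Qed.

(* Extending first along X and then along Y extends along X × Y. *)
Lemma prod2_cluster_compact {X Y : Type} (opX : opens X) (opY : opens Y) :
  is_topology opX -> cluster_compact opX -> cluster_compact opY ->
  cluster_compact (prod2_opens opX opY).
Proof.
  intros TX CX CY A S N F phi psi HN HF Hcl.
  destruct (CX A S N F phi (fun s => fst (psi s)) HN HF Hcl) as [b1 H1].
  destruct (CY _ S _ F _ (fun s => snd (psi s)) (filter_base_box_nbhd N opX b1 TX HN) HF H1)
    as [b2 H2].
  exists (b1, b2). intros W (U & O & HU & HO & Ob & HW) P HP.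
  destruct (HO _ Ob) as (V1 & V2 & HV1 & HV2 & V1b & V2b & HV). simpl in V1b, V2b.
  assert (Hbox : box_nbhd (box_nbhd N opX b1) opY b2
                   (fun t => U (fst (fst t)) /\ V1 (snd (fst t)) /\ V2 (snd t))).
  { exists (fun t => U (fst t) /\ V1 (snd t)), V2.
    split; [exists U, V1 | ]; repeat split; auto; tauto. }
  destruct (H2 _ Hbox P HP) as [s [Ps (Us & V1s & V2s)]]. simpl in Us, V1s, V2s.
  exists s; split; [exact Ps | apply HW; auto].
Qed.

Definition coord_nbhd {I T : Type} (op : opens T) (l : list I) (r : I -> T)
  : ((I -> T) -> Prop) -> Prop :=
  fun U => exists V : I -> T -> Prop,
    (forall j, In j l -> op (V j) /\ V j (r j)) /\
    (forall f, (forall j, In j l -> V j (f j)) -> U f).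

Lemma filter_base_coord_nbhd {I T : Type} (op : opens T) (l : list I) (r : I -> T) :
  is_topology op -> filter_base (coord_nbhd op l r).
Proof.
  intros [HT [HI _]]. split.
  - exists (fun _ _ => True). split; auto.
  - intros U1 U2 [V1 [H1 K1]] [V2 [H2 K2]].
    exists (fun j z => V1 j z /\ V2 j z). split.
    + intros j Hj. destruct (H1 j Hj), (H2 j Hj). split; auto.
    + intros f Hf. split; [apply K1|apply K2]; intros j Hj; apply Hf; auto.
Qed.

Lemma coord_nbhd_single {I T : Type} (op : opens T) (l : list I) (r : I -> T) (j : I)
  (O : T -> Prop) :
  is_topology op -> In j l -> op O -> O (r j) -> coord_nbhd op l r (fun f => O (f j)).
Proof.
  intros [HT _] Hj HO Or. exists (fun j' x => j' = j -> O x). split.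
  - intros j' _; split; [apply open_if; auto | intros ->; auto].
  - intros f Hf; apply Hf; auto.
Qed.

Lemma clusters_coord_incl {I T S : Type} (op : opens T) (F : (S -> Prop) -> Prop)
  (phi : S -> I -> T) (l1 l2 : list I) (r : I -> T) :
  is_topology op -> incl l2 l1 ->
  clusters (coord_nbhd op l1 r) F phi -> clusters (coord_nbhd op l2 r) F phi.
Proof.
  intros [HT _] Hincl Hc U [V [HV HU]] P HP.
  assert (HV' : coord_nbhd op l1 r (fun f => forall j, In j l2 -> V j (f j))).
  { exists (fun j x => In j l2 -> V j x). split.
    - intros j _; split; [apply open_if; auto; intro Hj; apply HV; auto|].
      intro Hj; apply HV; auto.
    - intros f Hf j Hj. apply Hf; auto. }
  destruct (Hc _ HV' P HP) as [s [Ps Vs]]. exists s; auto.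
Qed.

Lemma clusters_coord_proj {I T S : Type} (op : opens T) (F : (S -> Prop) -> Prop)
  (phi : S -> I -> T) (l : list I) (r : I -> T) (j : I) :
  is_topology op -> In j l ->
  clusters (coord_nbhd op l r) F phi -> clusters (nbhd op (r j)) F (fun s => phi s j).
Proof.
  intros T0 Hj Hc O [HO Or] P HP. exact (Hc _ (coord_nbhd_single op l r j O T0 Hj HO Or) P HP).
Qed.

Lemma clusters_coord_map {I A B S : Type} (opA : opens A) (opB : opens B) (c : A -> B)
  (F : (S -> Prop) -> Prop) (phi : S -> I -> A) (l : list I) (r : I -> A) :
  continuous opA opB c -> clusters (coord_nbhd opA l r) F phi ->
  clusters (coord_nbhd opB l (fun j => c (r j))) F (fun s j => c (phi s j)).
Proof.
  intros Hc Hcl U [V [HV HU]] P HP.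
  assert (HV' : coord_nbhd opA l r (fun f => forall j, In j l -> V j (c (f j)))).
  { exists (fun j x => V j (c x)). split; auto.
    intros j Hj. destruct (HV j Hj). split; [apply Hc|]; auto. }
  destruct (Hcl _ HV' P HP) as [s [Ps Vs]]. exists s; auto.
Qed.

Lemma closure_of_coord_clusters {I T S : Type} (op : opens T) (phi : S -> I -> T)
  (l : list I) (x : I -> T) :
  is_topology op -> (forall i, In i l) -> clusters (coord_nbhd op l x) (whole S) phi ->
  closure (prod_opens op) (fun f => exists s, f = phi s) x.
Proof.
  intros T0 Hl Hc O HO Ox. destruct (HO x Ox) as (l' & V & HV & HVO).
  assert (Hc' : clusters (coord_nbhd op l' x) (whole S) phi).
  { apply clusters_coord_incl with l; auto. intros i _; apply Hl. }
  destruct (Hc' O (ex_intro _ V (conj HV HVO)) (fun _ => True) (fun _ => Logic.I))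
    as [s [_ Os]].
  exists (phi s); eauto.
Qed.

Lemma coord_clusters_of_closure {I T S : Type} (op : opens T) (phi : S -> I -> T)
  (l : list I) (x : I -> T) :
  closure (prod_opens op) (fun f => exists s, f = phi s) x ->
  clusters (coord_nbhd op l x) (whole S) phi.
Proof.
  intros Hx U [V [HV HU]] P HP.
  destruct (Hx (fun f => forall j, In j l -> V j (f j))) as [y [Vy [s ->]]].
  - intros f Hf. exists l, V. split; auto.
    intros j Hj; split; [apply (proj1 (HV j Hj)) | apply Hf; auto].
  - intros j Hj; apply HV; auto.
  - exists s; split; [apply HP | apply HU; auto].
Qed.

Definition upd {I T : Type} (r : I -> T) (i : I) (t : T) : I -> T :=
  fun j => if excluded_middle_informative (j = i) then t else r j.

Lemma coord_cluster_step {I T S : Type} (op : opens T) (F : (S -> Prop) -> Prop)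
  (phi : S -> I -> T) (l : list I) (r : I -> T) (i : I) :
  is_topology op -> cluster_compact op -> filter_base F ->
  clusters (coord_nbhd op l r) F phi ->
  exists r', (forall j, In j l -> r' j = r j) /\ clusters (coord_nbhd op (i :: l) r') F phi.
Proof.
  intros T0 C0 HF Hc.
  destruct (classic (In i l)) as [Hi|Hi].
  { exists r; split; auto. apply clusters_coord_incl with l; auto. intros j [<-|Hj]; auto. }
  destruct (C0 _ S _ F phi (fun s => phi s i) (filter_base_coord_nbhd op l r T0) HF Hc)
    as [b Hb].
  assert (Hupd_l : forall j, In j l -> upd r i b j = r j).
  { intros j Hj; unfold upd. destruct excluded_middle_informative; [subst; contradiction|auto]. }
  assert (Hupd_i : upd r i b i = b).
  { unfold upd. destruct excluded_middle_informative; [auto|contradiction]. }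
  exists (upd r i b). split; auto.
  intros U [V [HV HU]] P HP.
  destruct (HV i (or_introl eq_refl)) as [HVi Vb]. rewrite Hupd_i in Vb.
  assert (Hbox : box_nbhd (coord_nbhd op l r) op b
                   (fun t => (forall j, In j l -> V j (fst t j)) /\ V i (snd t))).
  { exists (fun f => forall j, In j l -> V j (f j)), (V i). repeat split; auto.
    exists V. split; auto. intros j Hj.
    rewrite <- (Hupd_l j Hj). apply HV; right; auto. }
  destruct (Hb _ Hbox P HP) as [s [Ps [Vl Vi]]].
  exists s; split; auto. apply HU. intros j [<-|Hj]; auto.
Qed.

Lemma coord_cluster_exists {I T S : Type} (op : opens T) (F : (S -> Prop) -> Prop)
  (phi : S -> I -> T) :
  is_topology op -> cluster_compact op -> filter_base F -> (forall P, F P -> exists s, P s) ->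
  forall l, exists r, clusters (coord_nbhd op l r) F phi.
Proof.
  intros T0 C0 HF Hne l. induction l as [|i l IH].
  - destruct (Hne _ (proj1 HF)) as [s0 _]. exists (phi s0).
    intros U [V [_ HU]] P HP. destruct (Hne P HP) as [s Ps]. exists s; split; auto.
    apply HU. intros j [].
  - destruct IH as [r Hr].
    destruct (coord_cluster_step op F phi l r i T0 C0 HF Hr) as [r' [_ H]]. eauto.
Qed.

(* r is in the orbit closure of the finite family p, on the coordinates of l. *)
Definition orbit_adherent {G : group} {Z I : Type} (opZ : opens Z) (actZ : G -> Z -> Z)
  (l : list I) (p r : I -> Z) : Prop :=
  clusters (coord_nbhd opZ l r) (whole G) (fun g j => actZ g (p j)).

(* Coordinates are added one at a time; each new coordinate is brought to the
   common value by a net witnessing proximality of two points of Y. *)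
Section ProximalCollapse.
Variables (G : group) (Z Y : Type) (opZ : opens Z) (actZ : G -> Z -> Z)
  (opY : opens Y) (actY : G -> Y -> Y) (pi : Z -> Y).
Hypotheses (Ztop : is_topology opZ) (Zcc : cluster_compact opZ)
  (actZ_mul : forall g h z, actZ (gmul g h) z = actZ g (actZ h z))
  (actZ_cont : forall g, continuous opZ opZ (actZ g))
  (pi_cont : continuous opZ opY pi)
  (pi_equiv : forall g z, pi (actZ g z) = actY g (pi z))
  (Yhaus : hausdorff opY) (Yprox : proximal opY actY).

Lemma orbit_adherent_trans {I : Type} (l : list I) (p r s : I -> Z) :
  orbit_adherent opZ actZ l p r -> orbit_adherent opZ actZ l r s ->
  orbit_adherent opZ actZ l p s.
Proof.
  intros Hpr Hrs U [V [HV HU]] P HP.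
  destruct (Hrs _ (ex_intro _ V (conj HV (fun f Hf => Hf))) (fun _ => True) (fun _ => Logic.I))
    as [g [_ Hg]].
  assert (HVg : coord_nbhd opZ l r (fun f => forall j, In j l -> V j (actZ g (f j)))).
  { exists (fun j z => V j (actZ g z)). split; auto.
    intros j Hj. split; [apply actZ_cont, HV | apply Hg]; auto. }
  destruct (Hpr _ HVg (fun _ => True) (fun _ => Logic.I)) as [h [_ Hh]].
  exists (gmul g h). split; [apply HP|]. apply HU. intros j Hj.
  rewrite actZ_mul. apply Hh; auto.
Qed.

Lemma proximal_collapse {I : Type} (y0 : Y) (l : list I) (p : I -> Z) :
  exists r z, orbit_adherent opZ actZ l p r /\ forall j, In j l -> pi (r j) = z.
Proof.
  induction l as [|i l IH].
  { exists p, y0. split; [|intros j []].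
    intros U [V [_ HU]] P HP. exists (gone G). split; [apply HP|]. apply HU; intros j []. }
  destruct IH as [r [z [Hr Hz]]].
  destruct (coord_cluster_step opZ (whole G) _ l r i Ztop Zcc (filter_base_whole G) Hr)
    as [r' [Hr'r Hr']].
  destruct (Yprox z (pi (r' i))) as (z' & D & le & h & Hdir & Hconv_z & Hconv_i).
  destruct (coord_cluster_exists opZ (tails le) (fun d j => actZ (h d) (r' j)) Ztop Zcc
              (filter_base_tails le Hdir) (tails_nonempty le Hdir) (i :: l)) as [s Hs].
  exists s, z'. split.
  - apply orbit_adherent_trans with r'; auto.
    exact (clusters_range _ (tails le) h (fun g j => actZ g (r' j)) (filter_base_tails le Hdir) Hs).
  - (* each pi (s j) is a cluster point of a net in Y converging to z' *)
    assert (Hlim : forall j v, In j (i :: l) -> pi (r' j) = v ->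
                     converges opY le (fun d => actY (h d) v) z' -> pi (s j) = z').
    { intros j v Hj Hv Hconv. apply (cluster_point_is_limit opY le _ _ _ Yhaus Hconv).
      replace (fun d => actY (h d) v) with (fun d => pi (actZ (h d) (r' j))).
      - apply (clusters_continuous_image opZ opY pi); auto.
        exact (clusters_coord_proj opZ _ _ _ s j Ztop Hj Hs).
      - apply functional_extensionality; intro d. rewrite pi_equiv, Hv; auto. }
    intros j [<-|Hj].
    + apply (Hlim i (pi (r' i))); simpl; auto.
    + apply (Hlim j z); simpl; auto. rewrite Hr'r; auto.
Qed.

End ProximalCollapse.

Definition pair_act {G : group} {X Y : Type} (actX : G -> X -> X) (actY : G -> Y -> Y)
  (g : G) (p : X * Y) : X * Y :=
  (actX g (fst p), actY g (snd p)).

Lemma pair_act_continuous {G : group} {X Y : Type} (opX : opens X) (opY : opens Y)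
  (actX : G -> X -> X) (actY : G -> Y -> Y) (g : G) :
  continuous opX opX (actX g) -> continuous opY opY (actY g) ->
  continuous (prod2_opens opX opY) (prod2_opens opX opY) (pair_act actX actY g).
Proof.
  intros CX CY O HO p Op.
  destruct (HO _ Op) as (A & B & HA & HB & Ap & Bp & K).
  exists (fun x => A (actX g x)), (fun y => B (actY g y)).
  split; [apply CX; auto | split; [apply CY; auto | repeat split; auto]].
Qed.

Lemma fst_continuous {X Y : Type} (opX : opens X) (opY : opens Y) :
  is_topology opY -> continuous (prod2_opens opX opY) opX fst.
Proof. intros [YT _] A HA p Ap. exists A, (fun _ => True). repeat split; auto. Qed.

Lemma snd_continuous {X Y : Type} (opX : opens X) (opY : opens Y) :
  is_topology opX -> continuous (prod2_opens opX opY) opY snd.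
Proof. intros [XT _] B HB p Bp. exists (fun _ => True), B. repeat split; auto. Qed.

Lemma clusters_box_coord {I X Y S : Type} (opX : opens X) (opY : opens Y)
  (F : (S -> Prop) -> Prop) (phi : S -> I -> X) (psi : S -> Y)
  (l : list I) (xb : I -> X) (w : Y) (j : I) :
  is_topology opX -> In j l ->
  clusters (box_nbhd (coord_nbhd opX l xb) opY w) F (fun s => (phi s, psi s)) ->
  clusters (nbhd (prod2_opens opX opY) (xb j, w)) F (fun s => (phi s j, psi s)).
Proof.
  intros TX Hj Hc O [HO Ow] P HP.
  destruct (HO _ Ow) as (A & B & HA & HB & Aj & Bw & HAB). simpl in Aj, Bw.
  assert (Hbox : box_nbhd (coord_nbhd opX l xb) opY w (fun t => A (fst t j) /\ B (snd t))).
  { exists (fun f => A (f j)), B. repeat split; auto. apply coord_nbhd_single; auto. }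
  destruct (Hc _ Hbox P HP) as [s [Ps [As Bs]]]. exists s; split; [exact Ps | apply HAB; auto].
Qed.

Section CommonFiber.
Variables (G : group) (X Y : Type) (opX : opens X) (actX : G -> X -> X)
  (opY : opens Y) (actY : G -> Y -> Y) (W : X * Y -> Prop).
Hypotheses (FX : is_flow G opX actX) (FY : is_flow G opY actY) (Yprox : proximal opY actY)
  (Wclosed : closed (prod2_opens opX opY) W)
  (Winv : forall g p, W p -> W (actX g (fst p), actY g (snd p))).

Lemma collapse_in_W {I : Type} (y0 : Y) (l : list I) (p : I -> X * Y) :
  (forall j, W (p j)) ->
  exists r z, orbit_adherent (prod2_opens opX opY) (pair_act actX actY) l p r /\
    forall j, In j l -> W (r j) /\ snd (r j) = z.
Proof.
  intros Wp.
  destruct FX as (TX & CX & _ & _ & XM & XC). destruct FY as (TY & CY & HY & _ & YM & YC).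
  assert (TZ := prod2_topology opX opY TX TY).
  assert (CZ := prod2_cluster_compact opX opY TX
                  (compact_cluster_compact opX CX) (compact_cluster_compact opY CY)).
  destruct (proximal_collapse G (X * Y) Y _ (pair_act actX actY) opY actY snd TZ CZ
              (fun g h q => f_equal2 pair (XM g h (fst q)) (YM g h (snd q)))
              (fun g => pair_act_continuous opX opY actX actY g (XC g) (YC g))
              (snd_continuous opX opY TX) (fun g q => eq_refl) HY Yprox y0 l p)
    as [r [z [Hr Hz]]].
  exists r, z. split; auto. intros j Hj. split; auto.
  apply (clusters_closed_mem (prod2_opens opX opY) W (fun g => pair_act actX actY g (p j))).
  - exact Wclosed.
  - intro g; apply Winv, Wp.
  - exact (clusters_coord_proj _ (whole G) (fun g j => pair_act actX actY g (p j)) l r j TZ Hj Hr).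
Qed.

Lemma transport_common_fiber {I : Type} (l : list I) (q xb : I -> X) (z : Y) :
  (forall j, In j l -> W (q j, z)) ->
  clusters (coord_nbhd opX l xb) (whole G) (fun g j => actX g (q j)) ->
  exists w, forall j, In j l -> W (xb j, w).
Proof.
  intros Wq Hcl.
  destruct FX as (TX & _). destruct FY as (_ & CY & _).
  destruct (compact_cluster_extend _ _ _ _ (whole G) opY (fun g j => actX g (q j))
              (fun g => actY g z) CY (filter_base_coord_nbhd opX l xb TX)
              (filter_base_whole G) Hcl) as [w Hw].
  exists w. intros j Hj.
  apply (clusters_closed_mem (prod2_opens opX opY) W (fun g => (actX g (q j), actY g z))).
  - exact Wclosed.
  - intro g. exact (Winv g (q j, z) (Wq j Hj)).
  - exact (clusters_box_coord opX opY _ _ _ l xb w j TX Hj Hw).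
Qed.

Lemma common_fiber_point {I : Type} (l : list I) (xb : I -> X) (y0 : Y) :
  (forall j, In j l) -> (forall x, exists y, W (x, y)) ->
  minimal_point (prod_opens opX) (fun g (f : I -> X) j => actX g (f j)) xb ->
  exists w, forall j, W (xb j, w).
Proof.
  intros Hl Hpart Hmin.
  destruct FX as (TX & _ & _ & X1 & _). destruct FY as (TY & _).
  destruct (choice _ Hpart) as [yf Hyf].
  destruct (collapse_in_W y0 l (fun j => (xb j, yf (xb j))) (fun j => Hyf (xb j)))
    as [r [z [Hr Hrz]]].
  set (q := fun j => fst (r j)).
  (* q is in the orbit closure of xb; minimality of xb gives the converse *)
  assert (Hq : closure (prod_opens opX) (orbit (fun g (f : I -> X) j => actX g (f j)) xb) q).
  { apply (closure_of_coord_clusters opX (fun g j => actX g (xb j)) l); auto.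
    exact (clusters_coord_map _ opX fst _ _ l r (fst_continuous opX opY TY) Hr). }
  assert (Hself : closure (prod_opens opX) (orbit (fun g (f : I -> X) j => actX g (f j)) xb) xb).
  { intros O _ Ox. exists xb; split; auto. exists (gone G).
    apply functional_extensionality; intro j. rewrite X1; auto. }
  destruct (transport_common_fiber l q xb z) as [w Hw].
  - intros j Hj. destruct (Hrz j Hj) as [Wr <-]. unfold q. rewrite <- surjective_pairing; auto.
  - apply coord_clusters_of_closure. exact (Hmin q Hq xb Hself).
  - exists w; auto.
Qed.

End CommonFiber.

Lemma gmul_inv_r (G : group) (g : G) : gmul g (ginv g) = gone G.
Proof.
  assert (E1 : gmul (ginv g) (gmul g (ginv g)) = ginv g).
  { rewrite gmulA, gmulV, gmul1; auto. }
  rewrite <- (gmul1 G (gmul g (ginv g))).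
  rewrite <- (gmulV G (ginv g)) at 1.
  rewrite <- gmulA, E1. apply gmulV.
Qed.

Lemma fin_enum (k : nat) : exists l : list (fin k), forall i, In i l.
Proof.
  induction k as [|k [l Hl]].
  - exists nil. intros [m Hm]. lia.
  - set (widen := fun i : fin k => exist (fun m => m < S k) (proj1_sig i) (le_S _ _ (proj2_sig i))).
    exists (exist (fun m => m < S k) k (le_n (S k)) :: map widen l).
    intros [m Hm]. destruct (classic (m = k)) as [->|Hne].
    + left. f_equal. apply proof_irrelevance.
    + right. apply in_map_iff. assert (Hm' : m < k) by lia.
      exists (exist _ m Hm'). split; [|apply Hl]. unfold widen; simpl.
      f_equal. apply proof_irrelevance.
Qed.

Lemma minimal_translate_cover {G : group} {Y : Type} (opY : opens Y) (actY : G -> Y -> Y)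
  (V : Y -> Prop) (y0 : Y) :
  is_flow G opY actY -> minimal_flow opY actY -> opY V -> V y0 ->
  exists hs : list G, forall y, exists h, In h hs /\ V (actY h y).
Proof.
  intros (_ & CY & _ & _ & _ & YC) Hmin HV Vy0.
  apply (compact_finite_subfamily opY (fun h y => V (actY h y)) CY).
  - intro h; apply YC; auto.
  - intro y. destruct (Hmin y y0 V HV Vy0) as [y' [Vy' [g ->]]]. exists g; auto.
Qed.

(* Incontractibility yields a minimal point ξ of X^k with h_i ξ_i ∈ U for all i:
   take one near the point (h_i⁻¹ x0)_i. *)
Lemma incontractible_translate {G : group} {X : Type} (opX : opens X) (actX : G -> X -> X)
  (hs : list G) (U : X -> Prop) (x0 : X) :
  is_flow G opX actX -> incontractible opX actX -> opX U -> U x0 ->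
  exists xb : fin (length hs) -> X,
    minimal_point (prod_opens opX) (@pow_act G X (length hs) actX) xb /\
    forall i, U (actX (nth (proj1_sig i) hs (gone G)) (xb i)).
Proof.
  intros (_ & _ & _ & X1 & XM & XC) Hinc HU Ux0.
  set (h := fun i : fin (length hs) => nth (proj1_sig i) hs (gone G)).
  destruct (fin_enum (length hs)) as [l Hl].
  destruct (Hinc (length hs) (fun i => actX (ginv (h i)) x0)
                 (fun f => forall i, U (actX (h i) (f i)))) as [xb [Uxb Mxb]].
  - intros f Hf. exists l, (fun i x => U (actX (h i) x)). split.
    + intros i _; split; [apply XC; auto | apply Hf].
    + intros f' Hf' i; apply Hf'; auto.
  - intro i. rewrite <- XM, gmul_inv_r, X1; auto.
  - exists xb; split; auto.
Qed.

Theorem proposition4p4 (G : group) (X Y : Type)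
  (opX : opens X) (actX : G -> X -> X) (opY : opens Y) (actY : G -> Y -> Y) :
  countable_group G ->
  is_flow G opX actX -> is_flow G opY actY ->
  incontractible opX actX ->
  minimal_flow opY actY -> proximal opY actY ->
  disjoint_flows opX actX opY actY.
Proof.
  intros _ FX FY Hinc Hmin Hprox W Wcl Winv Hpx _ [x0 y0].
  apply NNPP; intro Hout.
  destruct (Wcl _ Hout) as (U & V & HU & HV & Ux0 & Vy0 & Hbox).
  destruct (minimal_translate_cover opY actY V y0 FY Hmin HV Vy0) as [hs Hhs].
  destruct (incontractible_translate opX actX hs U x0 FX Hinc HU Ux0) as [xb [Mxb Uxb]].
  destruct (fin_enum (length hs)) as [l Hl].
  destruct (common_fiber_point G X Y opX actX opY actY W FX FY Hprox Wcl Winv l xb y0 Hl Hpx Mxb)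
    as [w Hw].
  destruct (Hhs w) as [h [Hh Vhw]].
  destruct (In_nth hs h (gone G) Hh) as [n [Hn Hnth]].
  set (i := exist (fun m => m < length hs) n Hn : fin (length hs)).
  apply (Hbox (actX h (xb i), actY h w)); simpl.
  - rewrite <- Hnth. exact (Uxb i).
  - exact Vhw.
  - exact (Winv h (xb i, w) (Hw i)).
Qed.
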